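(* Let $\theta\in(0,\pi)$ and let $z$ be a real number with $z>-\csc(\theta)$. Suppose real numbers $\lambda_1,\lambda_2,\lambda_3$ satisfy \[ \lambda_1\lambda_2\lambda_3=\csc^2(\theta)\,(\lambda_1+\lambda_2+\lambda_3+2z),\qquad \lambda_i>0\ \ (i=1,2,3),\qquad \lambda_i\lambda_j>\csc^2(\theta)\ \ (i\ne j). \] Then $g:=\sum_{i<j}\lambda_i\lambda_j+2z\sum_i\lambda_i+3z^2>0$. *)

From Stdlib Require Import Reals.
Open Scope R_scope.

Definition csc (t : R) : R := / sin t.

(* Write c = csc θ > 0.  The pair condition λ_i λ_j > c² allows at most one λ_i
   below c, and the cubic constraint gives the identity
     c · Σ_{i<j} (λ_i - c)(λ_j - c) = 2c²(z + c) - (λ_1 - c)(λ_2 - c)(λ_3 - c),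
   so Σ_{i<j} (λ_i - c)(λ_j - c) ≥ 0 in every case.  Finally
     g = Σ_{i<j} (λ_i - c)(λ_j - c) + (z + c)(3(z + c) + 2(Σ λ_i - 3c)),
   where z + c > 0 and Σ λ_i > 3c because (Σ λ_i)² ≥ 3 Σ_{i<j} λ_i λ_j > 9c². *)
From Stdlib Require Import Reals Lra Psatz.
Open Scope R_scope.

Lemma csc_pos (theta : R) : 0 < theta < PI -> 0 < csc theta.
Proof.
intros Htheta; unfold csc.
apply Rinv_0_lt_compat, sin_gt_0; lra.
Qed.

Lemma gt_of_mul_gt_sqr (c x y : R) : 0 < x -> x < c -> x * y > c ^ 2 -> y > c.
Proof. intros Hx Hxc Hxy; nra. Qed.

Lemma shifted_product_neg (c x y z : R) :
  0 < x -> x < c -> x * y > c ^ 2 -> x * z > c ^ 2 ->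
  (x - c) * (y - c) * (z - c) < 0.
Proof.
intros Hx Hxc Hxy Hxz.
assert (Hy : y > c) by (apply (gt_of_mul_gt_sqr c x y); assumption).
assert (Hz : z > c) by (apply (gt_of_mul_gt_sqr c x z); assumption).
assert (Hyz : 0 < (y - c) * (z - c)) by nra.
nra.
Qed.

Section PairProducts.

Variables c z l1 l2 l3 : R.
Hypothesis Hc : 0 < c.
Hypothesis Hl1 : 0 < l1.
Hypothesis Hl2 : 0 < l2.
Hypothesis Hl3 : 0 < l3.
Hypothesis H12 : l1 * l2 > c ^ 2.
Hypothesis H13 : l1 * l3 > c ^ 2.
Hypothesis H23 : l2 * l3 > c ^ 2.

Lemma sum_gt_of_pair_products_gt : l1 + l2 + l3 > 3 * c.
Proof.
assert (Hsq : (l1 + l2 + l3) ^ 2 > (3 * c) ^ 2).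
{ assert (Hsym : (l1 + l2 + l3) ^ 2 - 3 * (l1 * l2 + l1 * l3 + l2 * l3)
                 = ((l1 - l2) ^ 2 + (l1 - l3) ^ 2 + (l2 - l3) ^ 2) / 2) by field.
  nra. }
nra.
Qed.

Hypothesis Hz : z > - c.
Hypothesis Hcubic : l1 * l2 * l3 = c ^ 2 * (l1 + l2 + l3 + 2 * z).

Lemma shifted_pair_sum_nonneg :
  0 <= (l1 - c) * (l2 - c) + (l1 - c) * (l3 - c) + (l2 - c) * (l3 - c).
Proof.
set (S := (l1 - c) * (l2 - c) + (l1 - c) * (l3 - c) + (l2 - c) * (l3 - c)).
set (P := (l1 - c) * (l2 - c) * (l3 - c)).
assert (Hid : c * S = 2 * c ^ 2 * (z + c) - P) by (unfold S, P; nra).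
assert (HP : P < 0 -> 0 <= S) by nra.
destruct (Rlt_or_le l1 c) as [L1 | L1].
{ apply HP; unfold P; apply shifted_product_neg; assumption. }
destruct (Rlt_or_le l2 c) as [L2 | L2].
{ apply HP; unfold P.
  replace ((l1 - c) * (l2 - c) * (l3 - c)) with ((l2 - c) * (l1 - c) * (l3 - c)) by ring.
  apply shifted_product_neg; lra. }
destruct (Rlt_or_le l3 c) as [L3 | L3].
{ apply HP; unfold P.
  replace ((l1 - c) * (l2 - c) * (l3 - c)) with ((l3 - c) * (l1 - c) * (l2 - c)) by ring.
  apply shifted_product_neg; lra. }
unfold S.
assert (0 <= (l1 - c) * (l2 - c)) by (apply Rmult_le_pos; lra).
assert (0 <= (l1 - c) * (l3 - c)) by (apply Rmult_le_pos; lra).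
assert (0 <= (l2 - c) * (l3 - c)) by (apply Rmult_le_pos; lra).
lra.
Qed.

Lemma pair_quadratic_pos :
  (l1 * l2 + l1 * l3 + l2 * l3) + 2 * z * (l1 + l2 + l3) + 3 * z ^ 2 > 0.
Proof.
assert (Hs := sum_gt_of_pair_products_gt).
assert (HS := shifted_pair_sum_nonneg).
assert (Hdecomp :
  (l1 * l2 + l1 * l3 + l2 * l3) + 2 * z * (l1 + l2 + l3) + 3 * z ^ 2
  = ((l1 - c) * (l2 - c) + (l1 - c) * (l3 - c) + (l2 - c) * (l3 - c))
    + (z + c) * (3 * (z + c) + 2 * (l1 + l2 + l3 - 3 * c))) by ring.
rewrite Hdecomp.
assert (0 < (z + c) * (3 * (z + c) + 2 * (l1 + l2 + l3 - 3 * c)))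
  by (apply Rmult_lt_0_compat; lra).
lra.
Qed.

End PairProducts.

Theorem lemma3p5 (theta z l1 l2 l3 : R) :
  0 < theta < PI ->
  z > - csc theta ->
  l1 * l2 * l3 = (csc theta) ^ 2 * (l1 + l2 + l3 + 2 * z) ->
  0 < l1 -> 0 < l2 -> 0 < l3 ->
  l1 * l2 > (csc theta) ^ 2 ->
  l1 * l3 > (csc theta) ^ 2 ->
  l2 * l3 > (csc theta) ^ 2 ->
  (l1 * l2 + l1 * l3 + l2 * l3) + 2 * z * (l1 + l2 + l3) + 3 * z ^ 2 > 0.
Proof.
intros Htheta Hz Hcubic Hl1 Hl2 Hl3 H12 H13 H23.
apply (pair_quadratic_pos (csc theta)); try assumption.
apply csc_pos; assumption.
Qed.
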